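(* Let $N\ge1$ and $L=\sum_{i=0}^N a_i(x)\partial_x^i$ with $a_i(x)=\sum_{j=0}^i a_{i,j}x^j$ complex polynomials, $a_0\equiv0$, $a_i\equiv0$ for $i>N$, and let $\delta_n^{(k)}=\sum_{i=k}^n\binom ni i!\,a_{i,i-k}$ ($0\le k\le n$). Suppose there are $\lambda_n\in\mathbb{C}$ ($n\ge0$, $\lambda_0=0$, $\lambda_n\notin\{0,\lambda_1,\ldots,\lambda_{n-1}\}$ for $n\ge1$) and monic polynomials $P_n(x)=\sum_{i=0}^nb_{n,i}x^i$ of degree $n$ with $\sum_{i=1}^Na_i\partial_x^iP_n=\lambda_nP_n$ for all $n\ge0$ (convention $b_{m,m}=1$, $b_{m,l}=0$ for $l>m$). Then for every $n\ge1$ and $k=1,\ldots,n$, $(-1)^k\delta_n^{(k)}$ equals the determinant of the $k\times k$ matrix $G$ with first row $G_{1,c}=(\lambda_{n-k}-\lambda_{n-k+c})\,b_{n-k+c,\,n-k}$ ($1\le c\le k$) and, for rows $2\le\rho\le k$, $G_{\rho,c}=b_{n-k+c,\;n-k+\rho-1}$.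
   Context: $\partial_x^i$ denotes the $i$-th derivative in $x$. With the stated convention, rows $2,\ldots,k$ of $G$ have ones on the subdiagonal and zeros below it. *)

From HB Require Import structures.
From mathcomp Require Import all_boot all_order all_algebra.
From mathcomp Require Import reals complex.
Set Implicit Arguments. Unset Strict Implicit. Unset Printing Implicit Defensive.
Import Order.TTheory GRing.Theory Num.Theory.
Local Open Scope ring_scope.

Definition coef_poly (R : realType) (a : nat -> nat -> R[i]) (i : nat) : {poly R[i]} :=
  \sum_(j < i.+1) (a i j)%:P * 'X^j.

Definition Lop (R : realType) (N : nat) (a : nat -> nat -> R[i]) (p : {poly R[i]}) : {poly R[i]} :=
  \sum_(1 <= i < N.+1) coef_poly a i * p^`(i).

Definition delta (R : realType) (a : nat -> nat -> R[i]) (n k : nat) : R[i] :=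
  \sum_(k <= i < n.+1) ('C(n, i) * i`!)%:R * a i (i - k)%N.

(* the k x k matrix G (0-indexed rows r and columns c; paper's rho = r+1, c_paper = c+1) *)
Definition Gmat (R : realType) (lambda : nat -> R[i]) (b : nat -> nat -> R[i]) (n k : nat)
  : 'M[R[i]]_k :=
  \matrix_(r < k, c < k)
    if r == 0 :> nat
    then (lambda (n - k)%N - lambda (n - k + c.+1)%N) * b (n - k + c.+1)%N (n - k)%N
    else b (n - k + c.+1)%N (n - k + r)%N.

(* [L] does not raise degrees and [x^l] (L x^m) = delta_m^(m-l) for
   l <= m.  Reading off the coefficient of x^(n-k) in L P_q = lambda_q P_q for
   q = n-k+c, and using lambda_(n-k) = delta_(n-k)^(0) and b_(q,n) = [q = n],
   the first row of G is a combination of the other rows plus the vector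
   (0, ..., 0, -delta_n^(k)).  Expanding along the first row leaves
   -delta_n^(k) times the (1,k) cofactor, whose minor is unitriangular because
   P_m is monic of degree m. *)
From Pilot Require Import Defs.
From HB Require Import structures.
From mathcomp Require Import all_boot all_order all_algebra.
From mathcomp Require Import reals complex.
From mathcomp Require Import zify ring.
Import Order.TTheory GRing.Theory Num.Theory.
Local Open Scope ring_scope.

Lemma expand_det_row_lincomb {R : comRingType} {n} {A : 'M[R]_n.+1} {i0}
    {c : 'I_n -> R} {v : 'I_n.+1 -> R} :
  (forall j, A i0 j = \sum_r c r * A (lift i0 r) j + v j) ->
  \det A = \sum_j v j * cofactor A i0 j.
Proof.
move=> rowA; rewrite (expand_det_row A i0).
under eq_bigr do rewrite rowA mulrDl mulr_suml.
rewrite big_split exchange_big /= big1 ?add0r // => r _.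
have adj_row0 : \sum_j A (lift i0 r) j * cofactor A i0 j = 0.
  move/matrixP/(_ (lift i0 r) i0): (mul_mx_adj A).
  rewrite !mxE eq_sym (negPf (neq_lift i0 r)) mulr0n => adjE.
  by rewrite -[RHS]adjE; apply: eq_bigr => j _; rewrite mxE.
by under eq_bigr do rewrite -mulrA; rewrite -mulr_sumr adj_row0 mulr0.
Qed.

Lemma Lop_is_linear (R : realType) (N : nat) (a : nat -> nat -> R[i]) :
  linear (Lop N a).
Proof.
move=> c p q; rewrite /Lop scaler_sumr -big_split; apply: eq_bigr => i _ /=.
by rewrite derivnD derivnZ mulrDr scalerAr.
Qed.

HB.instance Definition _ (R : realType) (N : nat) (a : nat -> nat -> R[i]) :=
  GRing.isLinear.Build R[i] {poly R[i]} {poly R[i]} _ (Lop N a) (@Lop_is_linear R N a).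

Lemma sum_nat_supp {V : nmodType} {F : nat -> V} {m n} M :
  (forall i, (i < m)%N || (n <= i)%N -> F i = 0) -> (n <= M)%N ->
  \sum_(m <= i < n) F i = \sum_(i < M) F i.
Proof.
move=> F_out le_nM; rewrite (big_nat_widen m n M) // big_geq_mkord big_mkcond.
by apply: eq_bigr => i _; case: ifP => // i_out; rewrite F_out //; lia.
Qed.

Section DifferentialOperator.
Context {R : realType} {N : nat} {a : nat -> nat -> R[i]}.
Hypothesis a0 : forall j, a 0%N j = 0.
Hypothesis a_gtN : forall i j, (N < i)%N -> a i j = 0.

Lemma coef_coef_poly i j : (Defs.coef_poly a i)`_j = if (j <= i)%N then a i j else 0.
Proof.
have -> : Defs.coef_poly a i = \poly_(k < i.+1) a i k.
  by rewrite poly_def; apply: eq_bigr => k _; rewrite mul_polyC.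
by rewrite coef_poly ltnS.
Qed.

Lemma deltaE m k : delta a m k = \sum_(k <= i < m.+1) a i (i - k) *+ m ^_ i.
Proof. by apply: eq_bigr => i _; rewrite -bin_ffact mulr_natl. Qed.

Lemma coef_Lop_Xn m l :
  (Lop N a 'X^m)`_l = if (l <= m)%N then delta a m (m - l) else 0.
Proof.
pose g i := (if (l <= m)%N && (m - l <= i)%N then a i (i - (m - l)) else 0) *+ m ^_ i.
have term i : (Defs.coef_poly a i * ('X^m)^`(i))`_l = g i.
  rewrite derivnXn mulrnAr coefMn coefMXn coef_coef_poly /g.
  have [le_im|lt_mi] := leqP i m; last by rewrite ffact_small.
  have [lm|ml] := leqP l m; last first.
    by case: ltnP => // _; rewrite ifF ?mul0rn //; lia.
  have [lt_l|ge_l] := ltnP l (m - i); first by rewrite ifF //; lia.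
  have -> : (l - (m - i) = i - (m - l))%N by lia.
  rewrite ifT; last lia.
  by rewrite ifT //; lia.
rewrite /Lop coef_sum (eq_bigr _ (fun i _ => term i)).
have [lm|ml] := leqP l m; last first.
  by rewrite big1 // => i _; rewrite /g leqNgt ml mul0rn.
have g_supp i : (i < 1)%N || (N < i)%N -> g i = 0.
  rewrite /g; case/orP=> [|/a_gtN ->]; last by rewrite if_same mul0rn.
  by rewrite ltnS leqn0 => /eqP->; rewrite a0 if_same mul0rn.
have g_supp' i : (i < m - l)%N || (m < i)%N -> g i = 0.
  rewrite /g; case/orP=> [lt_i|/ffact_small ->]; last by rewrite mulr0n.
  by rewrite ifF ?mul0rn //; lia.
rewrite (sum_nat_supp (N + m).+1 g_supp); last lia.
rewrite deltaE -(sum_nat_supp _ g_supp'); last lia.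
by apply: eq_big_nat => i /andP[le_i _]; rewrite /g lm le_i.
Qed.

Lemma coef_Lop p l :
  (Lop N a p)`_l = \sum_(l <= m < size p) p`_m * delta a m (m - l).
Proof.
rewrite -[p in Lop _ _ p]coefK poly_def linear_sum coef_sum.
rewrite big_geq_mkord [RHS]big_mkcond; apply: eq_bigr => m _.
by rewrite linearZ coefZ coef_Lop_Xn; case: ifP; rewrite ?mulr0.
Qed.

End DifferentialOperator.

Section TriangularEigenbasis.
Context {R : realType} {lambda : nat -> R[i]} {b d : nat -> nat -> R[i]}.
Hypothesis b_upper : forall q l, (q < l)%N -> b q l = 0.
Hypothesis b_diag : forall q, b q q = 1.
Hypothesis b_eigen : forall q l, (l <= q)%N ->
  lambda q * b q l = \sum_(l <= m < q.+1) b q m * d m (m - l).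

Lemma lambda_diag q : lambda q = d q 0.
Proof.
by have := b_eigen q q (leqnn q); rewrite b_diag mulr1 big_nat1 b_diag mul1r subnn.
Qed.

Lemma b_eigen_widen q l M : (l <= q < M)%N ->
  lambda q * b q l = \sum_(l <= m < M) b q m * d m (m - l).
Proof.
case/andP=> le_lq lt_qM; rewrite b_eigen // [RHS](@big_cat_nat _ _ _ q.+1) ?leqW //.
rewrite [X in _ = _ + X]big_nat_cond [X in _ = _ + X]big1 ?addr0 //.
by move=> m /andP[/andP[lt_qm _] _]; rewrite b_upper ?mul0r.
Qed.

Lemma GmatE p k r c : Gmat lambda b (p + k) k r c =
  if r == 0 :> nat then (lambda p - lambda (p + c.+1)) * b (p + c.+1) p
  else b (p + c.+1) (p + r).
Proof. by rewrite mxE addnK. Qed.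

Lemma Gmat_row0 p k (j : 'I_k.+1) :
  Gmat lambda b (p + k.+1) k.+1 0 j =
  \sum_(r < k) - d (p + r.+1) r.+1 * Gmat lambda b (p + k.+1) k.+1 (lift ord0 r) j
  - (j == ord_max)%:R * d (p + k.+1) k.+1.
Proof.
set q := (p + j.+1)%N.
have b_last : b q (p + k.+1) = (j == ord_max)%:R.
  rewrite /q; have [->|] := eqVneq j ord_max; first by rewrite b_diag.
  by rewrite -val_eqE /= => ne_jk; rewrite b_upper //; have := ltn_ord j; lia.
have mid : \sum_(p.+1 <= m < p + k.+1) b q m * d m (m - p) =
           \sum_(r < k) b q (p + r.+1) * d (p + r.+1) r.+1.
  rewrite -[p.+1]add0n big_addn (_ : p + k.+1 - p.+1 = k)%N; last lia.
  rewrite big_mkord; apply: eq_bigr => r _.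
  by rewrite (_ : r + p.+1 = p + r.+1)%N ?addKn //; lia.
have eigen_qp : lambda q * b q p = b q p * lambda p +
    (\sum_(r < k) b q (p + r.+1) * d (p + r.+1) r.+1
     + (j == ord_max)%:R * d (p + k.+1) k.+1).
  rewrite (b_eigen_widen q p (p + k.+1).+1); last by rewrite /q; have := ltn_ord j; lia.
  rewrite big_ltn ?big_nat_recr; try lia.
  by rewrite mid b_last subnn addKn -lambda_diag.
rewrite GmatE /= mulrBl (mulrC (lambda p)) eigen_qp.
under eq_bigr do rewrite GmatE lift0 /= mulNr mulrC.
rewrite sumrN; ring.
Qed.

Lemma det_Gmat_minor p k :
  \det (row' 0 (col' ord_max (Gmat lambda b (p + k.+1) k.+1))) = 1.
Proof.
rewrite -det_tr det_trig; last first.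
  apply/is_trig_mxP => i j lt_ij.
  by rewrite !mxE lift_max lift0 addnK /= b_upper // ltn_add2l.
by rewrite big1 // => i _; rewrite !mxE lift_max lift0 addnK /= b_diag.
Qed.

Lemma det_Gmat p k :
  \det (Gmat lambda b (p + k.+1) k.+1) = (-1) ^+ k.+1 * d (p + k.+1) k.+1.
Proof.
rewrite (expand_det_row_lincomb (Gmat_row0 p k)) (bigD1 ord_max) //= big1.
  by rewrite eqxx /cofactor det_Gmat_minor add0n exprS /=; ring.
by move=> j /negPf ->; rewrite mul0r oppr0 mul0r.
Qed.

End TriangularEigenbasis.

Theorem lemma2 (R : realType) (N : nat) (a : nat -> nat -> R[i])
    (lambda : nat -> R[i]) (P : nat -> {poly R[i]}) :
  (1 <= N)%N ->
  (forall j, a 0%N j = 0) ->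
  (forall i j, (N < i)%N -> a i j = 0) ->
  lambda 0%N = 0 ->
  (forall n, (1 <= n)%N -> lambda n != 0 /\ (forall m, (m < n)%N -> lambda n != lambda m)) ->
  (forall n, P n \is monic /\ size (P n) = n.+1) ->
  (forall n, Lop N a (P n) = lambda n *: P n) ->
  forall n k, (1 <= n)%N -> (1 <= k <= n)%N ->
    (-1) ^+ k * delta a n k = \det (Gmat lambda (fun m l => (P m)`_l) n k).
Proof.
move=> _ a0 a_gtN _ _ P_monic P_eigen n k _ /andP[k_gt0 le_kn].
set b := fun m l => (P m)`_l.
have b_upper q l : (q < l)%N -> b q l = 0.
  by move=> lt_ql; rewrite /b nth_default // (proj2 (P_monic q)).
have b_diag q : b q q = 1.
  by case: (P_monic q) => /monicP; rewrite lead_coefE => + size_q; rewrite size_q.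
have b_eigen q l : (l <= q)%N ->
    lambda q * b q l = \sum_(l <= m < q.+1) b q m * delta a m (m - l).
  by move=> _; rewrite /b -coefZ -P_eigen (coef_Lop a0 a_gtN) (proj2 (P_monic q)).
rewrite -(subnK le_kn); case: k k_gt0 {le_kn} => // k _.
by rewrite (det_Gmat b_upper b_diag b_eigen).
Qed.
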